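(* For every half-integer $h\ge\frac12$ and each sign, the complex $\Gamma_{\pm h}$ (see context), depending on $k=\begin{pmatrix}a&b\\c&d\end{pmatrix}\in\mathbb C^{2\times2}\cong\mathbb C^4$, has no homology if $Q=ad-bc\ne0$. If $Q(q)=0$ and $q\ne0$ then its homology $\mathfrak h_q^i$ at $q$ is isomorphic to $\mathbb C$ for $i=1,2$ and is zero for $i\ne1,2$, and every such $q$ is a regular homology point (with respect to $Q$).
   Context: Let $\epsilon=\begin{pmatrix}0&1\\-1&0\end{pmatrix}$, $k^+=k$, $k^-=k^T$. $\Gamma_{\pm h}$ is the complex $S^{2h}\mathbb C^2\to S^{2h-1}\mathbb C^2\otimes\mathbb C^2\to S^{2h-2}\mathbb C^2$ in homological degrees $1,2,3$ (the last term dropped when $h=\frac12$), with first map the linear map $z^{\otimes 2h}\mapsto z^{\otimes(2h-1)}\otimes(k^{\mp}\epsilon z)$ and second map the linear map $z^{\otimes(2h-1)}\otimes y\mapsto (z^T\epsilon k^{\pm}\epsilon y)\,z^{\otimes(2h-2)}$, for $z,y\in\mathbb C^2$. A point $q$ is a regular homology point if $Q(q)=0$, $q$ is a smooth point of $Q=0$, $\dim\mathfrak h_k=\dim\mathfrak h_q$ for all $k$ with $Q(k)=0$ near $q$ (Zariski), and there is $\xi\in T_q\mathbb C^4$ with $\dot Q\ne0$ such that the differential on $\mathfrak h_q$ induced by the derivative $\dot d$ of the differential along $\xi$ at $q$ is exact. *)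

From HB Require Import structures.
From mathcomp Require Import all_boot all_order all_algebra.
From mathcomp Require Import mpoly.

Set Implicit Arguments.
Unset Strict Implicit.
Unset Printing Implicit Defensive.

Import Order.TTheory GRing.Theory Num.Theory.
Local Open Scope ring_scope.

(*  * k = [[a, b], [c, d]] : 'M_2, with k 0 0 = a, k 0 1 = b, k 1 0 = c,      *)
(*    k 1 1 = d;  vectors z = (z_0, z_1) of C^2.                              *)
(*  * h = (m+1)/2 with m : nat, i.e. n := 2h = m.+1 ranges over n >= 1.       *)
(*  * Sign: [s = true] is Gamma_{+h}, [s = false] is Gamma_{-h}.              *)
(*  * Coordinates on S^p C^2 : 'rV_(p.+1), chosen so that the pure power      *)
(*    z^{(x) p} has coordinates  (z_0^i z_1^(p-i))_(i <= p)  (this is a       *)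
(*    linear isomorphism S^p C^2 ~ C^(p+1): the pure powers span S^p C^2).     *)
(*  * S^p C^2 (x) C^2 : 'rV_(p.+1 + p.+1) = row_mx u_0 u_1, where u_j is the  *)
(*    S^p-component multiplying the j-th basis vector of C^2.  Hence          *)
(*    z^{(x) p} (x) y  has coordinates  row_mx (y_0 *: pw z) (y_1 *: pw z).    *)
(*  * Linear maps act on row vectors from the right:  v |-> v *m D.           *)

Definition epsmx (R : comRingType) : 'M[R]_2 :=
  \matrix_(i < 2, j < 2)
    (if (i == 0) && (j == 1) then 1 else if (i == 1) && (j == 0) then -1 else 0).

Definition pw (R : comRingType) (p : nat) (z : 'rV[R]_2) : 'rV[R]_(p.+1) :=
  \row_(i < p.+1) (z 0 0 ^+ i * z 0 1 ^+ (p - i)).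

Definition shup (R : comRingType) (p q : nat) : 'M[R]_(p, q) :=
  \matrix_(r < p, i < q) ((r : nat) == i.+1)%:R.
Definition shid (R : comRingType) (p q : nat) : 'M[R]_(p, q) :=
  \matrix_(r < p, i < q) ((r : nat) == i)%:R.

(* k^{-+} in the first map and k^{+-} in the second one *)
Definition kfirst (R : comRingType) (s : bool) (k : 'M[R]_2) : 'M[R]_2 :=
  if s then k^T else k.
Definition ksecond (R : comRingType) (s : bool) (k : 'M[R]_2) : 'M[R]_2 :=
  if s then k else k^T.

(* First map  S^(m+1) C^2 -> S^m C^2 (x) C^2,
   z^{(x)(m+1)} |-> z^{(x) m} (x) (M z),  M = k^{-+} eps.
   In coordinates: out_j(i) = M_{j0} in(i+1) + M_{j1} in(i). *)
Definition Gd1 (R : comRingType) (s : bool) (m : nat) (k : 'M[R]_2)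
  : 'M[R]_(m.+2, m.+1 + m.+1) :=
  let M := kfirst s k *m epsmx R in
  row_mx (M 0 0 *: shup R m.+2 m.+1 + M 0 1 *: shid R m.+2 m.+1)
         (M 1 0 *: shup R m.+2 m.+1 + M 1 1 *: shid R m.+2 m.+1).

(* Second map  S^m C^2 (x) C^2 -> S^(m-1) C^2  (zero space when m = 0),
   z^{(x) m} (x) y |-> (z^T N y) z^{(x)(m-1)},  N = eps k^{+-} eps.
   In coordinates: out(i) = sum_b N_{0b} u_b(i+1) + N_{1b} u_b(i). *)
Definition Gd2 (R : comRingType) (s : bool) (m : nat) (k : 'M[R]_2)
  : 'M[R]_(m.+1 + m.+1, m) :=
  let N := epsmx R *m ksecond s k *m epsmx R in
  col_mx (N 0 0 *: shup R m.+1 m + N 1 0 *: shid R m.+1 m)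
         (N 0 1 *: shup R m.+1 m + N 1 1 *: shid R m.+1 m).

Definition Qf (R : comRingType) (k : 'M[R]_2) : R :=
  k 0 0 * k 1 1 - k 0 1 * k 1 0.

Definition kline (C : comRingType) (q xi : 'M[C]_2) : 'M[{poly C}]_2 :=
  map_mx polyC q + 'X *: map_mx polyC xi.

(* directional derivatives at q along xi: coefficient of t in f(q + t xi) *)
Definition dQ (C : comRingType) (q xi : 'M[C]_2) : C :=
  (Qf (kline q xi))`_1.
Definition dGd1 (C : comRingType) s m (q xi : 'M[C]_2) :=
  map_mx (fun p : {poly C} => p`_1) (Gd1 s m (kline q xi)).
Definition dGd2 (C : comRingType) s m (q xi : 'M[C]_2) :=
  map_mx (fun p : {poly C} => p`_1) (Gd2 s m (kline q xi)).

(* Dimension of the homology h^i of a complex C_1 --D1--> C_2 --D2--> C_3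
   (homological degrees 1,2,3; all other chain groups are 0):
   h^i = ker(outgoing map) / im(incoming map). *)
Definition homdim (F : fieldType) (p1 p2 p3 : nat)
  (D1 : 'M[F]_(p1, p2)) (D2 : 'M[F]_(p2, p3)) (i : nat) : nat :=
  match i with
  | 1 => \rank (kermx D1)
  | 2 => \rank (kermx D2) - \rank D1
  | 3 => \rank (1%:M : 'M[F]_p3) - \rank D2
  | _ => 0
  end.

(* The map induced on homology h^1 -> h^2 -> h^3 by E1 : C_1 -> C_2,
   E2 : C_2 -> C_3 is exact (ker = im at h^1, h^2 and h^3), expressed on
   representatives. *)
Definition induced_exact (F : fieldType) (p1 p2 p3 : nat)
  (D1 : 'M[F]_(p1, p2)) (D2 : 'M[F]_(p2, p3))
  (E1 : 'M[F]_(p1, p2)) (E2 : 'M[F]_(p2, p3)) : Prop :=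
  [/\ (* at h^1 :  ker delta_1 = 0 *)
      (forall x : 'rV[F]_p1, x *m D1 = 0 -> (x *m E1 <= D1)%MS -> x = 0),
      (* at h^2 :  ker delta_2 \subset im delta_1 *)
      (forall x : 'rV[F]_p2, x *m D2 = 0 -> (x *m E2 <= D2)%MS ->
         exists2 y : 'rV[F]_p1, y *m D1 = 0 & (x - y *m E1 <= D1)%MS),
      (* at h^2 :  im delta_1 \subset ker delta_2 *)
      (forall y : 'rV[F]_p1, y *m D1 = 0 -> (y *m E1 *m E2 <= D2)%MS)
    & (* at h^3 :  h^3 = ker delta_3 \subset im delta_2 *)
      (forall x : 'rV[F]_p3,
         exists2 y : 'rV[F]_p2, y *m D2 = 0 & (x - y *m E2 <= D2)%MS)].

Definition kcoord (F : ringType) (k : 'M[F]_2) : 'I_4 -> F :=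
  fun i => k (inord (i %/ 2)) (inord (i %% 2)).

Definition Ghomdim (F : fieldType) (s : bool) (m : nat) (k : 'M[F]_2) (i : nat)
  : nat := homdim (Gd1 s m k) (Gd2 s m k) i.

Definition regular_homology_point (F : fieldType) (s : bool) (m : nat)
  (q : 'M[F]_2) : Prop :=
  [/\ Qf q = 0,
      (* q is a smooth point of {Q = 0}: dQ_q <> 0 *)
      (exists xi : 'M[F]_2, dQ q xi != 0),
      (* homology dimensions are constant on {Q = 0} near q (Zariski):
         on the trace of some basic Zariski open set D(f) containing q *)
      (exists f : {mpoly F[4]},
         f.@[kcoord q] != 0 /\
         forall k : 'M[F]_2, Qf k = 0 -> f.@[kcoord k] != 0 ->
           forall i, Ghomdim s m k i = Ghomdim s m q i)
    & (exists xi : 'M[F]_2, dQ q xi != 0 /\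
         induced_exact (Gd1 s m q) (Gd2 s m q) (dGd1 s m q xi) (dGd2 s m q xi))].

From HB Require Import structures.
From mathcomp Require Import all_boot all_order all_algebra.
From mathcomp Require Import mpoly.
From mathcomp Require Import ring zify.
Import Order.TTheory GRing.Theory Num.Theory.
Local Open Scope ring_scope.

Set Implicit Arguments.
Unset Strict Implicit.
Unset Printing Implicit Defensive.

(* With M := k^-+ eps one has det M = Q(k), and Gamma_(+-h)(k) is the Koszul
   complex of the two commuting operators B(M_0), B(M_1) attached to the rows
   of M, where B(a, b) is the transpose of multiplication by a t + b on
   polynomials.  B(a, b) has full rank when (a, b) <> 0, and two such operators
   have a common kernel only when their linear forms are proportional; the
   kernel is then spanned by evaluation at the common root.  Hence the complex
   is exact when det M <> 0, while on the punctured cone d1 has a line <g> as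
   kernel and d2 is onto, so the homology is C, C, 0 there.  If dQ(xi) <> 0,
   the derivative d1' of d1 along xi sends g outside im d1, and counting
   dimensions gives ker d2 = im d1 + <g d1'>: the induced differential is
   exact. *)

Lemma ord2P (i : 'I_2) : i = 0 \/ i = 1.
Proof. by case: i => [[|[|//]] lt]; [left | right]; apply: val_inj. Qed.

Section LinearFormOperator.
Variable R : comRingType.

(* The transpose of multiplication by a t + b, from polynomials of degree < p
   to polynomials of degree <= p. *)
Definition lmul_mx p (a b : R) : 'M[R]_(p.+1, p) :=
  a *: shup R p.+1 p + b *: shid R p.+1 p.

Lemma sum_mul_eqn n (F : 'I_n.+1 -> R) k :
  \sum_(l < n.+1) F l * ((l : nat) == k)%:R = if (k < n.+1)%N then F (inord k) else 0.
Proof.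
case: ltnP => lt_k.
  rewrite (bigD1 (inord k)) //= inordK // eqxx mulr1 big1 ?addr0 // => l ne_l.
  case: eqP => [e|]; last by rewrite mulr0.
  by case/eqP: ne_l; apply: val_inj; rewrite /= inordK.
rewrite big1 // => l _; case: eqP => [e|]; last by rewrite mulr0.
by move: (ltn_ord l); rewrite e ltnNge lt_k.
Qed.

Lemma lmul_mx_coef p a b (r : 'I_p.+1) (i : 'I_p) :
  lmul_mx p a b r i = a * ((r : nat) == i.+1)%:R + b * ((r : nat) == i)%:R.
Proof. by rewrite !mxE. Qed.

Lemma mul_lmul_mx n p a b (x : 'M[R]_(n, p.+1)) r i :
  (x *m lmul_mx p a b) r i = a * x r (inord i.+1) + b * x r (inord i).
Proof.
rewrite mxE; under eq_bigr do rewrite lmul_mx_coef mulrDr mulrCA [x r _ * (b * _)]mulrCA.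
by rewrite big_split /= -!mulr_sumr !sum_mul_eqn !ltnS ltn_ord ltnW.
Qed.

Lemma lmul_mx_lin p s t a b c d :
  lmul_mx p (s * a + t * c) (s * b + t * d) = s *: lmul_mx p a b + t *: lmul_mx p c d.
Proof. by apply/matrixP => r i; rewrite !mxE; ring. Qed.

Lemma lmul_mx0 p : lmul_mx p 0 0 = 0.
Proof. by rewrite /lmul_mx !scale0r addr0. Qed.

Lemma lmul_mxN p a b : lmul_mx p (- a) (- b) = - lmul_mx p a b.
Proof. by rewrite /lmul_mx !scaleNr opprD. Qed.

Lemma lmul_mx_mulC p a b c d :
  lmul_mx p.+1 a b *m lmul_mx p c d = lmul_mx p.+1 c d *m lmul_mx p a b.
Proof.
apply/matrixP => r i; have lt_i := ltn_ord i.
rewrite !mul_lmul_mx !lmul_mx_coef !inordK; try lia.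
move: ((r : nat) == i.+2)%:R ((r : nat) == i.+1)%:R ((r : nat) == i)%:R => e2 e1 e0.
ring.
Qed.

End LinearFormOperator.

Lemma map_lmul_mx (R S : comRingType) (f : {additive R -> S}) p a b :
  map_mx f (lmul_mx p a b) = lmul_mx p (f a) (f b).
Proof.
by apply/matrixP => r i; rewrite mxE !lmul_mx_coef raddfD !mulr_natr !raddfMn.
Qed.

Section LinearFormOperatorField.
Variable F : fieldType.

Lemma rank_lmul_mx p (a b : F) : (a != 0) || (b != 0) -> \rank (lmul_mx p a b) = p.
Proof.
move=> nz_ab; apply/eqP; rewrite eqn_leq rank_leq_col /=.
have rank_sub (f : 'I_p -> 'I_p.+1) :
  (\rank (rowsub f (lmul_mx p a b)) <= \rank (lmul_mx p a b))%N by exact/mxrankS/rowsub_sub.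
have [b0|nz_b] := eqVneq b 0.
  have nz_a : a != 0 by move: nz_ab; rewrite b0 eqxx orbF.
  apply: leq_trans _ (rank_sub (lift ord0)).
  rewrite mxrank_unit // unitmxE -det_tr det_trig.
    under eq_bigr do rewrite !mxE lift0 eqxx b0 mul0r addr0 mulr1.
    by rewrite prodr_const card_ord unitfE expf_neq0.
  apply/is_trig_mxP => r i lt_ir.
  by rewrite !mxE lift0 b0 eqSS gtn_eqF // mulr0 mul0r addr0.
apply: leq_trans _ (rank_sub (widen_ord (leqnSn p))).
rewrite mxrank_unit // unitmxE det_trig.
  under eq_bigr do rewrite !mxE /= eqxx (ltn_eqF (ltnSn _)) mulr0 add0r mulr1.
  by rewrite prodr_const card_ord unitfE expf_neq0.
apply/is_trig_mxP => r i lt_ri.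
by rewrite !mxE /= (ltn_eqF lt_ri) (ltn_eqF (leqW lt_ri)) !mulr0 addr0.
Qed.

Lemma det2_system_eq0 (a b c d y z : F) :
  a * d - b * c != 0 -> a * y + b * z = 0 -> c * y + d * z = 0 -> y = 0 /\ z = 0.
Proof.
move=> nz_det e1 e2.
have ey : (a * d - b * c) * y = 0.
  by transitivity (d * (a * y + b * z) - b * (c * y + d * z)); [ring | rewrite e1 e2; ring].
have ez : (a * d - b * c) * z = 0.
  by transitivity (a * (c * y + d * z) - c * (a * y + b * z)); [ring | rewrite e1 e2; ring].
by split; apply/eqP; [move/eqP: ey | move/eqP: ez]; rewrite mulf_eq0 (negbTE nz_det).
Qed.

Lemma lmul_mx_common_ker p (a b c d : F) (x : 'rV[F]_p.+2) :
  a * d - b * c != 0 -> x *m lmul_mx p.+1 a b = 0 -> x *m lmul_mx p.+1 c d = 0 -> x = 0.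
Proof.
move=> nz_det /rowP e1 /rowP e2; apply/rowP => j; rewrite mxE.
have lt_j := ltn_ord j; pose i : 'I_p.+1 := inord j.-1.
move: (e1 i) (e2 i); rewrite !mul_lmul_mx !mxE => {}e1 {}e2.
have [x1 x0] := det2_system_eq0 nz_det e1 e2.
have [j0|j_gt0] := posnP j.
  by rewrite -x0; congr (x 0 _); apply: val_inj; rewrite /= !inordK j0.
by rewrite -x1; congr (x 0 _); apply: val_inj; rewrite /= !inordK; lia.
Qed.

Lemma lmul_mx_dep p (a b c d : F) (x : 'rV[F]_p.+2) : x != 0 ->
  x *m lmul_mx p.+1 a b = 0 -> x *m lmul_mx p.+1 c d = 0 -> a * d - b * c = 0.
Proof.
move=> nz_x e1 e2; apply/eqP; apply: contraNT nz_x => nz_det.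
by rewrite (lmul_mx_common_ker nz_det e1 e2).
Qed.

Lemma lmul_mx_ker p (a b : F) : (a != 0) || (b != 0) ->
  exists2 g : 'rV[F]_p.+1, g != 0 &
    forall c d, a * d - b * c = 0 -> g *m lmul_mx p c d = 0.
Proof.
(* evaluation at the root -b/a of a t + b, homogenised *)
move=> nz_ab; exists (\row_(j < p.+1) ((- b) ^+ j * a ^+ (p - j))).
  have [a0|nz_a] := eqVneq a 0.
    have nz_b : b != 0 by move: nz_ab; rewrite a0 eqxx.
    apply/eqP => /rowP /(_ ord_max); rewrite !mxE /= subnn mulr1 => /eqP.
    by rewrite expf_eq0 oppr_eq0 (negbTE nz_b) andbF.
  apply/eqP => /rowP /(_ ord0); rewrite !mxE /= subn0 mul1r => /eqP.
  by rewrite expf_eq0 (negbTE nz_a) andbF.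
move=> c d det0; apply/rowP => i; have lt_i := ltn_ord i.
rewrite mul_lmul_mx !mxE !inordK; try lia.
have -> : (p - i = (p - i.+1).+1)%N by lia.
transitivity ((- b) ^+ i * a ^+ (p - i.+1) * (a * d - b * c)).
  by rewrite !exprS; ring.
by rewrite det0 mulr0.
Qed.

End LinearFormOperatorField.

Section Koszul.
Variables (R : comRingType) (p : nat).

Definition koszul1 (M : 'M[R]_2) : 'M[R]_(p.+2, p.+1 + p.+1) :=
  row_mx (lmul_mx p.+1 (M 0 0) (M 0 1)) (lmul_mx p.+1 (M 1 0) (M 1 1)).

Definition koszul2 (M : 'M[R]_2) : 'M[R]_(p.+1 + p.+1, p) :=
  col_mx (lmul_mx p (M 1 0) (M 1 1)) (lmul_mx p (- M 0 0) (- M 0 1)).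

Lemma koszul1_koszul2 M P :
  koszul1 M *m koszul2 P =
    lmul_mx p.+1 (M 0 0) (M 0 1) *m lmul_mx p (P 1 0) (P 1 1)
    - lmul_mx p.+1 (M 1 0) (M 1 1) *m lmul_mx p (P 0 0) (P 0 1).
Proof. by rewrite mul_row_col lmul_mxN mulmxN. Qed.

Lemma koszul_comp M : koszul1 M *m koszul2 M = 0.
Proof. by rewrite koszul1_koszul2 lmul_mx_mulC subrr. Qed.

Lemma koszul_anticomm M P :
  koszul1 M *m koszul2 P + koszul1 P *m koszul2 M = 0.
Proof.
rewrite !koszul1_koszul2 [lmul_mx _ (P 0 0) _ *m _]lmul_mx_mulC.
by rewrite [lmul_mx _ (P 1 0) _ *m _]lmul_mx_mulC addrA subrK subrr.
Qed.

End Koszul.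

Lemma map_koszul1 (R S : comRingType) (f : {additive R -> S}) p M :
  map_mx f (koszul1 p M) = koszul1 p (map_mx f M).
Proof. by rewrite /koszul1 map_row_mx !map_lmul_mx !mxE. Qed.

Lemma map_koszul2 (R S : comRingType) (f : {additive R -> S}) p M :
  map_mx f (koszul2 p M) = koszul2 p (map_mx f M).
Proof. by rewrite /koszul2 map_col_mx !map_lmul_mx !raddfN !mxE. Qed.

Lemma row2_neq0 (R : ringType) (M : 'M[R]_2) :
  M != 0 -> exists i, (M i 0 != 0) || (M i 1 != 0).
Proof.
by case/matrix0Pn => i [j nz_ij]; exists i; case: (ord2P j) nz_ij => -> ->; rewrite ?orbT.
Qed.

Lemma Qf_eq0_rows (R : comRingType) (M : 'M[R]_2) :
  Qf M = 0 -> forall i j, M i 0 * M j 1 - M i 1 * M j 0 = 0.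
Proof.
rewrite /Qf => Q0 i j.
case: (ord2P i) => ->; case: (ord2P j) => ->; [ring | exact: Q0 | | ring].
by rewrite -[RHS]oppr0 -Q0; ring.
Qed.

Section Derivative.
Variable C : comRingType.

Lemma klineE (q xi : 'M[C]_2) i j : kline q xi i j = (q i j)%:P + 'X * (xi i j)%:P.
Proof. by rewrite !mxE. Qed.

Lemma coef_affine (a b : C) i :
  (a%:P + 'X * b%:P)`_i = if i == 0%N then a else if i == 1%N then b else 0.
Proof.
by rewrite coefD coefC coefXM coefC; case: i => [|[|i]] //=; rewrite ?addr0 ?add0r.
Qed.

Lemma coef1_affine_mul (a b c d : C) :
  ((a%:P + 'X * b%:P) * (c%:P + 'X * d%:P))`_1 = a * d + b * c.
Proof. by rewrite coefM big_ord_recr big_ord1 /= !coef_affine /=; ring. Qed.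

Lemma dQE (q xi : 'M[C]_2) :
  dQ q xi = q 0 0 * xi 1 1 + xi 0 0 * q 1 1 - q 0 1 * xi 1 0 - xi 0 1 * q 1 0.
Proof. by rewrite /dQ /Qf !klineE coefB !coef1_affine_mul; ring. Qed.

Lemma dQ_polar (q xi : 'M[C]_2) : dQ q xi = Qf (q + xi) - Qf q - Qf xi.
Proof. by rewrite dQE /Qf !mxE; ring. Qed.

Lemma map_coef1_kline (q xi : 'M[C]_2) : map_mx (coefp 1) (kline q xi) = xi.
Proof. by apply/matrixP => i j; rewrite [LHS]mxE /= klineE coef_affine. Qed.

End Derivative.

Section KoszulField.
Variables (F : fieldType) (p : nat).

Lemma mxrank_col_mx_ge m1 m2 n (A : 'M[F]_(m1, n)) (B : 'M[F]_(m2, n)) :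
  (maxn (\rank A) (\rank B) <= \rank (col_mx A B))%N.
Proof.
have /andP[sA sB] : (A <= col_mx A B)%MS && (B <= col_mx A B)%MS by rewrite -col_mx_sub.
by rewrite geq_max !mxrankS.
Qed.

Lemma mxrank_row_mx_ge m n1 n2 (A : 'M[F]_(m, n1)) (B : 'M[F]_(m, n2)) :
  (maxn (\rank A) (\rank B) <= \rank (row_mx A B))%N.
Proof.
rewrite -[\rank (row_mx A B)]mxrank_tr tr_row_mx -(mxrank_tr A) -(mxrank_tr B).
exact: mxrank_col_mx_ge.
Qed.

Lemma rank_koszul2 (M : 'M[F]_2) : M != 0 -> \rank (koszul2 p M) = p.
Proof.
case/row2_neq0 => i nz_i; apply/eqP; rewrite eqn_leq rank_leq_col /=.
apply: leq_trans (mxrank_col_mx_ge _ _); rewrite leq_max.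
case: (ord2P i) nz_i => -> nz_i; last by rewrite rank_lmul_mx ?leqnn.
by rewrite [\rank (lmul_mx _ (- _) _)]rank_lmul_mx ?leqnn ?orbT // !oppr_eq0.
Qed.

Lemma koszul1_row_free (M : 'M[F]_2) : Qf M != 0 -> row_free (koszul1 p M).
Proof.
move=> nzQ; apply/inj_row_free => x; rewrite mul_mx_row -row_mx0.
by case/eq_row_mx; apply: lmul_mx_common_ker.
Qed.

Lemma koszul1_singular (M : 'M[F]_2) : Qf M = 0 -> M != 0 ->
  \rank (koszul1 p M) = p.+1 /\
  exists2 g : 'rV[F]_p.+2, g != 0 & g *m koszul1 p M = 0.
Proof.
move=> Q0 nz_M; have [i nz_i] := row2_neq0 nz_M.
have [g nz_g gK] := lmul_mx_ker p.+1 nz_i.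
have g_ker : g *m koszul1 p M = 0 by rewrite mul_mx_row !gK ?row_mx0 ?Qf_eq0_rows.
split; last by exists g.
apply/eqP; rewrite eqn_leq -ltnS; apply/andP; split.
  rewrite ltn_neqAle rank_leq_row andbT; apply: contra nz_g => free.
  by rewrite -(mulmx_free_eq0 _ free) g_ker.
apply: leq_trans (mxrank_row_mx_ge _ _); rewrite leq_max.
case: (ord2P i) nz_i => -> nz_i.
  by rewrite [\rank (lmul_mx _ (M 0 0) _)]rank_lmul_mx ?leqnn.
by rewrite [\rank (lmul_mx _ (M 1 0) _)]rank_lmul_mx ?leqnn ?orbT.
Qed.

Lemma koszul1_deform_inj (M P : 'M[F]_2) (x y : 'rV[F]_p.+2) :
  Qf M = 0 -> M != 0 -> dQ M P != 0 ->
  x *m koszul1 p M = 0 -> x *m koszul1 p P = y *m koszul1 p M -> x = 0.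
Proof.
move=> Q0 nz_M nz_dQ; rewrite !mul_mx_row -row_mx0.
move=> /eq_row_mx [xM0 xM1] /eq_row_mx [xP0 xP1].
apply/eqP; apply: contraNT nz_dQ => nz_x.
have xM i : x *m lmul_mx p.+1 (M i 0) (M i 1) = 0 by case: (ord2P i) => ->.
have xP s t : s * M 0 0 + t * M 1 0 = 0 -> s * M 0 1 + t * M 1 1 = 0 ->
    x *m lmul_mx p.+1 (s * P 0 0 + t * P 1 0) (s * P 0 1 + t * P 1 1) = 0.
  move=> e0 e1; rewrite lmul_mx_lin mulmxDr -!scalemxAr xP0 xP1 !scalemxAr -mulmxDr.
  by rewrite -lmul_mx_lin e0 e1 lmul_mx0 mulmx0.
(* (M 1 0, - M 0 0) and (M 1 1, - M 0 1) are relations between the rows of M,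
   so x also kills the same combinations of the rows of P; as x kills only
   forms proportional to the rows of M, this forces dQ M P *: M = 0. *)
have Q0' : M 1 0 * M 0 1 + - M 0 0 * M 1 1 = 0 by rewrite -[RHS]oppr0 -Q0 /Qf; ring.
have Q1' : M 1 1 * M 0 0 + - M 0 1 * M 1 0 = 0 by rewrite -Q0 /Qf; ring.
have xPa := xP (M 1 0) (- M 0 0) (ltac:(ring)) Q0'.
have xPb := xP (M 1 1) (- M 0 1) Q1' (ltac:(ring)).
have Ra i j := Qf_eq0_rows Q0 i j.
have Da i := lmul_mx_dep nz_x (xM i) xPa.
have Db i := lmul_mx_dep nz_x (xM i) xPb.
have dQM : dQ M P *: M = 0.
  apply/matrixP => i j; rewrite !mxE dQE; case: (ord2P j) => ->.
    transitivity (P 0 0 * (M i 0 * M 1 1 - M i 1 * M 1 0)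
      - P 1 0 * (M i 0 * M 0 1 - M i 1 * M 0 0) - (M i 0 * (M 1 0 * P 0 1 + - M 0 0 * P 1 1)
      - M i 1 * (M 1 0 * P 0 0 + - M 0 0 * P 1 0))); first by ring.
    by rewrite !Ra Da; ring.
  transitivity (P 0 1 * (M i 0 * M 1 1 - M i 1 * M 1 0)
    - P 1 1 * (M i 0 * M 0 1 - M i 1 * M 0 0) - (M i 0 * (M 1 1 * P 0 1 + - M 0 1 * P 1 1)
    - M i 1 * (M 1 1 * P 0 0 + - M 0 1 * P 1 0))); first by ring.
  by rewrite !Ra Db; ring.
by move/eqP: dQM; rewrite scaler_eq0 (negbTE nz_M) orbF.
Qed.

Lemma kermx_koszul2_sub (M P : 'M[F]_2) (g : 'rV[F]_p.+2) :
  Qf M = 0 -> M != 0 -> dQ M P != 0 -> g != 0 -> g *m koszul1 p M = 0 ->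
  (kermx (koszul2 p M) <= koszul1 p M + g *m koszul1 p P)%MS.
Proof.
move=> Q0 nz_M nz_dQ nz_g gK; set S := (_ + _)%MS.
have [rank1 _] := koszul1_singular Q0 nz_M.
have gP_out : ~~ (g *m koszul1 p P <= koszul1 p M)%MS.
  apply: contra nz_g => /submxP [y ey]; apply/eqP.
  exact: koszul1_deform_inj Q0 nz_M nz_dQ gK ey.
have S_ker : (S <= kermx (koszul2 p M))%MS.
  rewrite addsmx_sub !sub_kermx koszul_comp eqxx -mulmxA /=.
  have /(congr1 (mulmx g)) := koszul_anticomm p P M.
  by rewrite mulmxDr !mulmxA gK mul0mx addr0 mulmx0 => ->.
have M_ltS : (koszul1 p M < S)%MS.
  rewrite ltmxE addsmxSl /=; apply: contra gP_out; apply: submx_trans.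
  exact: addsmxSr.
rewrite -(mxrank_leqif_sup S_ker).2 eqn_leq mxrankS //= mxrank_ker rank_koszul2 //.
by have := rank_ltmx M_ltS; rewrite rank1; lia.
Qed.

Lemma koszul_induced_exact (M P : 'M[F]_2) :
  Qf M = 0 -> M != 0 -> dQ M P != 0 ->
  induced_exact (koszul1 p M) (koszul2 p M) (koszul1 p P) (koszul2 p P).
Proof.
move=> Q0 nz_M nz_dQ.
have [_ [g nz_g gK]] := koszul1_singular Q0 nz_M.
have full2 : row_full (koszul2 p M) by rewrite /row_full rank_koszul2.
split=> [x xK /submxP [y ey] | x xK2 _ | y _ | x].
- exact: koszul1_deform_inj Q0 nz_M nz_dQ xK ey.
- have xker : (x <= kermx (koszul2 p M))%MS by rewrite sub_kermx xK2.
  have /sub_addsmxP [u ->] := submx_trans xker (kermx_koszul2_sub Q0 nz_M nz_dQ nz_g gK).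
  exists (u.2 *m g); first by rewrite -mulmxA gK mulmx0.
  by rewrite -!mulmxA addrK submxMl.
- exact: submx_full.
- by exists 0; [rewrite mul0mx | exact: submx_full].
Qed.

End KoszulField.

Lemma sum_ord2 (V : nmodType) (F : 'I_2 -> V) : \sum_(i < 2) F i = F 0 + F 1.
Proof. by rewrite big_ord_recl big_ord1; congr (_ + F _); apply: val_inj. Qed.

Section Gamma.
Variable R : comRingType.

Definition kmat s (k : 'M[R]_2) : 'M[R]_2 := kfirst s k *m epsmx R.

Lemma mulmx_eps_col0 (A : 'M[R]_2) i : (A *m epsmx R) i 0 = - A i 1.
Proof. by rewrite mxE sum_ord2 !mxE /=; ring. Qed.

Lemma mulmx_eps_col1 (A : 'M[R]_2) i : (A *m epsmx R) i 1 = A i 0.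
Proof. by rewrite mxE sum_ord2 !mxE /=; ring. Qed.

Lemma eps_mulmx_row0 (A : 'M[R]_2) j : (epsmx R *m A) 0 j = A 1 j.
Proof. by rewrite mxE sum_ord2 !mxE /=; ring. Qed.

Lemma eps_mulmx_row1 (A : 'M[R]_2) j : (epsmx R *m A) 1 j = - A 0 j.
Proof. by rewrite mxE sum_ord2 !mxE /=; ring. Qed.

Lemma ksecond_tr s (k : 'M[R]_2) : ksecond s k = (kfirst s k)^T.
Proof. by case: s; rewrite /= ?trmxK. Qed.

Lemma Gd1E s m (k : 'M[R]_2) : Gd1 s m k = koszul1 m (kmat s k).
Proof. by []. Qed.

Lemma Gd2E s m (k : 'M[R]_2) : Gd2 s m k = koszul2 m (kmat s k).
Proof.
rewrite /Gd2 /koszul2 /lmul_mx /kmat ksecond_tr !mulmx_eps_col0 !mulmx_eps_col1.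
by rewrite !eps_mulmx_row0 !eps_mulmx_row1 !mxE !opprK.
Qed.

Lemma Qf_kmat s (k : 'M[R]_2) : Qf (kmat s k) = Qf k.
Proof.
by rewrite /Qf !mulmx_eps_col0 !mulmx_eps_col1; case: s; rewrite /kfirst ?mxE; ring.
Qed.

Lemma kmatD s (k1 k2 : 'M[R]_2) : kmat s (k1 + k2) = kmat s k1 + kmat s k2.
Proof. by rewrite /kmat -mulmxDl; case: s; rewrite /kfirst ?linearD. Qed.

Lemma dQ_kmat s (q xi : 'M[R]_2) : dQ (kmat s q) (kmat s xi) = dQ q xi.
Proof. by rewrite !dQ_polar -kmatD !Qf_kmat. Qed.

Lemma kmat_neq0 s (k : 'M[R]_2) : k != 0 -> kmat s k != 0.
Proof.
apply: contraNneq => k0.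
have eps_sqr : epsmx R *m epsmx R = -1.
  apply/matrixP => i j; case: (ord2P j) => ->;
  by rewrite ?mulmx_eps_col0 ?mulmx_eps_col1 !mxE; case: (ord2P i) => -> /=; rewrite ?oppr0.
have : kfirst s k *m (epsmx R *m epsmx R) = 0 by rewrite mulmxA -/(kmat s k) k0 mul0mx.
rewrite eps_sqr mulmxN mulmx1 => /eqP; rewrite oppr_eq0.
by case: s {k0} => //=; rewrite trmx_eq0.
Qed.

End Gamma.

Lemma map_kmat (R S : comRingType) (f : {additive R -> S}) s (k : 'M[R]_2) :
  map_mx f (kmat s k) = kmat s (map_mx f k).
Proof.
apply/matrixP => i j; rewrite [LHS]mxE.
case: (ord2P j) => ->; rewrite ?mulmx_eps_col0 ?mulmx_eps_col1 ?raddfN;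
  by case: s; rewrite /kfirst !mxE.
Qed.

Lemma dGd1E (C : comRingType) s m (q xi : 'M[C]_2) : dGd1 s m q xi = Gd1 s m xi.
Proof.
rewrite /dGd1 (_ : (fun p : {poly C} => p`_1) = coefp 1) //.
by rewrite map_koszul1 map_kmat map_coef1_kline.
Qed.

Lemma dGd2E (C : comRingType) s m (q xi : 'M[C]_2) : dGd2 s m q xi = Gd2 s m xi.
Proof.
rewrite /dGd2 !Gd2E (_ : (fun p : {poly C} => p`_1) = coefp 1) //.
by rewrite map_koszul2 map_kmat map_coef1_kline.
Qed.

Section GammaField.
Variables (F : fieldType) (s : bool) (m : nat).

Lemma Ghomdim_rank (k : 'M[F]_2) : k != 0 -> forall i,
  Ghomdim s m k i = (if (i == 1) || (i == 2) then m.+2 - \rank (Gd1 s m k) else 0)%N.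
Proof.
move=> nz_k; have rank2 : \rank (Gd2 s m k) = m by rewrite Gd2E rank_koszul2 ?kmat_neq0.
by case=> [|[|[|[|i]]]] //; rewrite /Ghomdim /homdim /= ?mxrank_ker ?mxrank1 ?rank2 //; lia.
Qed.

Lemma Ghomdim_nonsingular (k : 'M[F]_2) : Qf k != 0 -> forall i, Ghomdim s m k i = 0%N.
Proof.
move=> nzQ i; have nz_k : k != 0 by apply: contraNneq nzQ => ->; rewrite /Qf !mxE subrr.
have /eqP rank1 : row_free (Gd1 s m k) by rewrite Gd1E koszul1_row_free ?Qf_kmat.
by rewrite Ghomdim_rank // rank1 subnn if_same.
Qed.

Lemma Ghomdim_cone (k : 'M[F]_2) : Qf k = 0 -> k != 0 -> forall i,
  Ghomdim s m k i = (if (i == 1) || (i == 2) then 1 else 0)%N.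
Proof.
move=> Q0 nz_k i; rewrite -(Qf_kmat s) in Q0.
have [rank1 _] := koszul1_singular m Q0 (kmat_neq0 s nz_k).
by rewrite Ghomdim_rank // Gd1E rank1 subSnn.
Qed.

End GammaField.

Lemma dQ_neq0 (F : fieldType) (q : 'M[F]_2) : q != 0 -> exists xi, dQ q xi != 0.
Proof.
have [d11 d10 d01 d00] : [/\ dQ q (delta_mx 1 1) = q 0 0, dQ q (delta_mx 1 0) = - q 0 1,
    dQ q (delta_mx 0 1) = - q 1 0 & dQ q (delta_mx 0 0) = q 1 1].
  by rewrite !dQE !mxE /=; split; ring.
case/matrix0Pn => i [j]; case: (ord2P i) => ->; case: (ord2P j) => -> nz_q.
- by exists (delta_mx 1 1); rewrite d11.
- by exists (delta_mx 1 0); rewrite d10 oppr_eq0.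
- by exists (delta_mx 0 1); rewrite d01 oppr_eq0.
- by exists (delta_mx 0 0); rewrite d00.
Qed.

Lemma kcoordE (R : ringType) (k : 'M[R]_2) (i j : 'I_2) :
  kcoord k (inord (2 * i + j)) = k i j.
Proof.
have lt_i := ltn_ord i; have lt_j := ltn_ord j.
rewrite /kcoord inordK; last lia.
by congr (k _ _); apply: val_inj; rewrite /= inordK; lia.
Qed.

Lemma Ghomdim_zariski_const (F : fieldType) s m (q : 'M[F]_2) :
  Qf q = 0 -> q != 0 ->
  exists f : {mpoly F[4]},
    f.@[kcoord q] != 0 /\
    forall k : 'M[F]_2, Qf k = 0 -> f.@[kcoord k] != 0 ->
      forall i, Ghomdim s m k i = Ghomdim s m q i.
Proof.
move=> Q0 nz_q; have /matrix0Pn [a [b nz_ab]] := nz_q; exists 'X_(inord (2 * a + b)).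
rewrite mevalXU kcoordE; split=> // k Qk0; rewrite mevalXU kcoordE => nz_kab i.
have nz_k : k != 0 by apply: contraNneq nz_kab => ->; rewrite mxE.
by rewrite !Ghomdim_cone.
Qed.

Lemma regular_homology_point_cone (F : fieldType) s m (q : 'M[F]_2) :
  Qf q = 0 -> q != 0 -> regular_homology_point s m q.
Proof.
move=> Q0 nz_q; have [xi nz_dQ] := dQ_neq0 nz_q.
split=> //; [by exists xi | exact: Ghomdim_zariski_const | exists xi; split=> //].
rewrite dGd1E dGd2E !Gd1E !Gd2E.
by apply: koszul_induced_exact; rewrite ?Qf_kmat ?dQ_kmat ?kmat_neq0.
Qed.

Theorem mainTheorem7 (C : numClosedFieldType) (m : nat) (s : bool) :
  (forall k : 'M[C]_2, Qf k != 0 -> forall i : nat, Ghomdim s m k i = 0%N) /\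
  (forall q : 'M[C]_2, Qf q = 0 -> q != 0 ->
     (forall i : nat, Ghomdim s m q i = (if (i == 1)%N || (i == 2)%N then 1 else 0)%N)
     /\ regular_homology_point s m q).
Proof.
split=> [k | q Q0 nz_q]; first exact: Ghomdim_nonsingular.
by split; [exact: Ghomdim_cone | exact: regular_homology_point_cone].
Qed.
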